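(* Let $\alpha \in (0, \tfrac{1}{2}\pi)$ and put $\kappa = \sin \alpha$. Then $$\tfrac{1}{2} \pi \,_2F_1 (\tfrac{1}{3}, \tfrac{2}{3}; 1; \kappa^2) = \sqrt6 \int_{\cos \frac{1}{3} (\pi + \alpha)}^{\cos \frac{1}{3} (\pi - \alpha)} \frac{1}{\sqrt{T_6 (x) - \cos 2 \alpha}} \, {\rm d} x .$$
   Context: $\,_2F_1$ denotes the Gauss hypergeometric function. $T_6$ is the degree six Chebyshev polynomial of the first kind, so that $T_6(\cos t) = \cos 6t$. *)

From Stdlib Require Import Reals Factorial.
From Coquelicot Require Import Coquelicot.
Open Scope R_scope.

Fixpoint poch (a : R) (n : nat) : R :=
  match n with
  | O => 1
  | S k => poch a k * (a + INR k)
  end.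

Definition hyp2F1 (a b c z : R) : R :=
  Series (fun n => poch a n * poch b n / (poch c n * INR (Factorial.fact n)) * z ^ n).

Fixpoint chebT (n : nat) (x : R) : R :=
  match n with
  | O => 1
  | S O => x
  | S ((S m) as k) => 2 * x * chebT k x - chebT m x
  end.

From Stdlib Require Import Reals Factorial Lra Lia.
From Coquelicot Require Import Coquelicot.
Open Scope R_scope.

(* Substitute sin θ = κ sin φ and x = cos((π + θ)/3).  Then
   T_6(x) - cos 2α = cos 2θ - cos 2α = 2 κ^2 cos^2 φ, and as φ increases over
   (-π/2, π/2) the point x decreases over the interval of integration, so the
   integral becomes ∫ sin((π + θ)/3) / (3 √2 cos θ) dφ over (-π/2, π/2).
   Symmetrising in φ replaces the numerator by (√3/2) cos(θ/3), and
   cos(θ/3) = cos θ · 2F1(1/3, 2/3; 1/2; sin^2 θ): both sides solve y'' = -y/9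
   with y(0) = 1, y'(0) = 0, by the hypergeometric equation.  Finally
   2F1(1/3, 2/3; 1/2; κ^2 sin^2 φ) is integrated termwise with Wallis' integrals
   ∫ sin^(2n) = π (1/2)_n / n!, which turns the lower parameter 1/2 into 1. *)

(** * Power series with bounded coefficients *)

Lemma poch_pos a n : 0 < a -> 0 < poch a n.
Proof.
  intro Ha; induction n as [|n IH]; simpl; [lra|].
  apply Rmult_lt_0_compat; [exact IH|]. pose proof (pos_INR n); lra.
Qed.

Lemma poch_1 n : poch 1 n = INR (fact n).
Proof.
  induction n as [|n IH]; [reflexivity|].
  simpl poch. rewrite IH, fact_simpl, mult_INR, S_INR. ring.
Qed.

Lemma CV_radius_ge_1 (u : nat -> R) :
  (forall n, Rabs (u n) <= 1) -> Rbar_le 1 (CV_radius u).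
Proof.
  intro Hu. apply (proj1 (CV_radius_bounded u)).
  exists 1. intro n. rewrite pow1, Rmult_1_r. apply Hu.
Qed.

Lemma Rbar_lt_Rabs_radius (u : nat -> R) w :
  Rbar_le 1 (CV_radius u) -> Rabs w < 1 -> Rbar_lt (Rabs w) (CV_radius u).
Proof. destruct (CV_radius u); simpl; lra. Qed.

Lemma is_series_PSeries_unit_disk (u : nat -> R) w :
  Rbar_le 1 (CV_radius u) -> Rabs w < 1 ->
  is_series (fun n => u n * w ^ n) (PSeries u w).
Proof.
  intros Hu Hw. apply Series_correct, ex_series_Rabs, CV_disk_inside.
  exact (Rbar_lt_Rabs_radius u w Hu Hw).
Qed.

Lemma is_derive_PSeries_unit_disk (u : nat -> R) w :
  Rbar_le 1 (CV_radius u) -> Rabs w < 1 ->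
  is_derive (fun x => PSeries u x) w (PSeries (PS_derive u) w).
Proof. intros Hu Hw. exact (is_derive_PSeries u w (Rbar_lt_Rabs_radius u w Hu Hw)). Qed.

Lemma is_series_mul_var (v d : nat -> R) (w l : R) :
  d O = 0 -> (forall n, d (S n) = v n) ->
  is_series (fun n => v n * w ^ n) l -> is_series (fun n => d n * w ^ n) (w * l).
Proof.
  intros Hd0 HdS Hv. apply is_series_decr_1.
  match goal with |- is_series _ ?L => replace L with (scal w l)
    by (rewrite Hd0; unfold plus, opp, scal; simpl; unfold mult; simpl; ring) end.
  apply (is_series_ext (fun n => scal w (v n * w ^ n))); [|exact (is_series_scal_l w _ _ Hv)].
  intro n. rewrite HdS. unfold scal; simpl; unfold mult; simpl. ring.
Qed.

Lemma PSeries_tail_le (u : nat -> R) (q w : R) (N : nat) :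
  (forall n, Rabs (u n) <= 1) -> Rabs w <= q < 1 ->
  Rabs (PSeries u w - sum_f_R0 (fun k => u k * w ^ k) N) <= q ^ S N / (1 - q).
Proof.
  intros Hu [Hwq Hq].
  pose proof (Rabs_pos w) as Hw0.
  set (tail k := u (S N + k)%nat * w ^ (S N + k)).
  assert (Htail : forall k, Rabs (tail k) <= q ^ S N * q ^ k).
  { intro k. unfold tail. rewrite Rabs_mult, <- RPow_abs, <- pow_add.
    rewrite <- (Rmult_1_l (q ^ _)).
    apply Rmult_le_compat;
      [apply Rabs_pos | apply pow_le, Rabs_pos | apply Hu | apply pow_incr; lra]. }
  assert (Hgeom : is_series (fun k => q ^ S N * q ^ k) (q ^ S N / (1 - q))).
  { apply (is_series_scal_l (q ^ S N) (fun k => q ^ k) (/ (1 - q))).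
    apply is_series_geom. rewrite Rabs_pos_eq; lra. }
  assert (Hex : ex_series (fun k => Rabs (tail k))).
  { apply (ex_series_le (V := R_CompleteNormedModule) _ (fun k => q ^ S N * q ^ k));
      [|eexists; exact Hgeom].
    intro k. change (Rabs (Rabs (tail k)) <= q ^ S N * q ^ k).
    rewrite Rabs_Rabsolu. apply Htail. }
  unfold PSeries. rewrite (Series_incr_n _ (S N)); [|lia|].
  2: { apply (ex_series_Rabs (fun k => u k * w ^ k)), CV_disk_inside.
       apply Rbar_lt_Rabs_radius; [apply CV_radius_ge_1, Hu | lra]. }
  simpl pred. fold tail.
  replace (_ + Series tail - _) with (Series tail) by ring.
  eapply Rle_trans; [apply Series_Rabs, Hex|].
  rewrite <- (is_series_unique _ _ Hgeom).
  apply Series_le; [|eexists; exact Hgeom].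
  intro k. split; [apply Rabs_pos | apply Htail].
Qed.

(** * The hypergeometric equation *)

Definition hyp_coef (a b c : R) (n : nat) : R :=
  poch a n * poch b n / (poch c n * INR (fact n)).

Lemma hyp2F1_PSeries a b c : hyp2F1 a b c = PSeries (hyp_coef a b c).
Proof. reflexivity. Qed.

Section HypergeometricSeries.

Variables a b c : R.
Hypotheses (Ha : 0 < a) (Hb : 0 < b) (Hc : 0 < c).
Hypotheses (Hab : a * b <= c) (Habc : a + b <= c + 1).

Lemma hyp_coef_S n :
  hyp_coef a b c (S n) * ((c + INR n) * (INR n + 1))
  = hyp_coef a b c n * ((a + INR n) * (b + INR n)).
Proof.
  unfold hyp_coef. simpl poch. rewrite fact_simpl, mult_INR, S_INR.
  pose proof (poch_pos c n Hc). pose proof (INR_fact_lt_0 n). pose proof (pos_INR n).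
  field. repeat split; lra.
Qed.

Lemma hyp_coef_pos n : 0 < hyp_coef a b c n.
Proof.
  unfold hyp_coef. pose proof (INR_fact_lt_0 n).
  apply Rdiv_lt_0_compat; apply Rmult_lt_0_compat; auto using poch_pos.
Qed.

Lemma Rabs_hyp_coef_le_1 n : Rabs (hyp_coef a b c n) <= 1.
Proof.
  rewrite Rabs_pos_eq by (left; apply hyp_coef_pos).
  induction n as [|n IH]; [unfold hyp_coef; simpl; lra|].
  pose proof (hyp_coef_S n) as Hrec. pose proof (hyp_coef_pos n). pose proof (pos_INR n).
  assert (Hratio : (a + INR n) * (b + INR n) <= (c + INR n) * (INR n + 1)) by nra.
  apply Rmult_le_reg_r with ((c + INR n) * (INR n + 1)); [nra|].
  rewrite Hrec, Rmult_1_l. apply Rle_trans with ((a + INR n) * (b + INR n)); [|exact Hratio].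
  rewrite <- (Rmult_1_l ((a + INR n) * _)) at 2. apply Rmult_le_compat_r; [nra | exact IH].
Qed.

Lemma CV_radius_hyp_coef : Rbar_le 1 (CV_radius (hyp_coef a b c)).
Proof. apply CV_radius_ge_1, Rabs_hyp_coef_le_1. Qed.

Lemma hyp2F1_ode w : Rabs w < 1 ->
  let u := hyp_coef a b c in
  w * (1 - w) * PSeries (PS_derive (PS_derive u)) w
  + (c - (a + b + 1) * w) * PSeries (PS_derive u) w - a * b * PSeries u w = 0.
Proof.
  intros Hw u.
  assert (Hu0 : Rbar_le 1 (CV_radius u)) by apply CV_radius_hyp_coef.
  assert (Hu1 : Rbar_le 1 (CV_radius (PS_derive u))) by now rewrite CV_radius_derive.
  assert (Hu2 : Rbar_le 1 (CV_radius (PS_derive (PS_derive u))))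
    by now rewrite !CV_radius_derive.
  pose proof (is_series_PSeries_unit_disk _ _ Hu0 Hw) as S0.
  pose proof (is_series_PSeries_unit_disk _ _ Hu1 Hw) as S1.
  pose proof (is_series_PSeries_unit_disk _ _ Hu2 Hw) as S2.
  assert (S1w : is_series (fun n => INR n * u n * w ^ n) (w * PSeries (PS_derive u) w)).
  { apply (is_series_mul_var (PS_derive u)); [simpl; ring | | exact S1].
    intro n. unfold PS_derive. ring. }
  assert (S2w : is_series (fun n => INR n * (INR n + 1) * u (S n) * w ^ n)
                  (w * PSeries (PS_derive (PS_derive u)) w)).
  { apply (is_series_mul_var (PS_derive (PS_derive u))); [simpl; ring | | exact S2].
    intro n. unfold PS_derive. rewrite !S_INR. ring. }
  assert (S2ww : is_series (fun n => (INR n - 1) * INR n * u n * w ^ n)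
                   (w * (w * PSeries (PS_derive (PS_derive u)) w))).
  { apply (is_series_mul_var (fun n => INR n * (INR n + 1) * u (S n)));
      [simpl; ring | | exact S2w].
    intro n. rewrite S_INR. ring. }
  pose proof (is_series_plus _ _ _ _
    (is_series_plus _ _ _ _ (is_series_minus _ _ _ _ S2w S2ww)
       (is_series_scal_l c _ _ S1))
    (is_series_plus _ _ _ _ (is_series_scal_l (-(a + b + 1)) _ _ S1w)
       (is_series_scal_l (-(a * b)) _ _ S0))) as Hsum.
  assert (Hzero : is_series (fun n => scal 0 (u n * w ^ n)) (scal 0 (PSeries u w)))
    by exact (is_series_scal_l 0 _ _ S0).
  (* every coefficient of the left-hand side vanishes by the recurrence [hyp_coef_S] *)
  apply (is_series_ext _ (fun n => scal 0 (u n * w ^ n))) in Hsum.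
  2: { intro n. cbv beta. unfold PS_derive. rewrite S_INR.
       unfold scal, plus, opp; simpl; unfold mult; simpl.
       transitivity (w ^ n * (u (S n) * ((c + INR n) * (INR n + 1))
                              - u n * ((a + INR n) * (b + INR n)))); [ring|].
       unfold u. rewrite hyp_coef_S. ring. }
  apply is_series_unique in Hsum. apply is_series_unique in Hzero.
  rewrite Hzero in Hsum. unfold scal, plus, minus, opp in Hsum; simpl in Hsum.
  unfold mult in Hsum; simpl in Hsum. lra.
Qed.

End HypergeometricSeries.

(** * A trigonometric evaluation of 2F1(a, 1-a; 1/2; .) *)

Lemma is_derive_continuity_pt (f : R -> R) x l : is_derive f x l -> continuity_pt f x.
Proof.
  intro Hf. apply continuity_pt_filterlim, (ex_derive_continuous (V := R_NormedModule)).
  exists l. exact Hf.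
Qed.

Lemma is_derive_0_eq (f : R -> R) (r : R) :
  (forall z, -r < z < r -> is_derive f z 0) -> forall z, -r < z < r -> f z = f 0.
Proof.
  intros Hf z Hz.
  assert (Hin : forall x, Rmin 0 z <= x <= Rmax 0 z -> -r < x < r).
  { intros x Hx. unfold Rmin, Rmax in Hx. destruct (Rle_dec 0 z); lra. }
  destruct (MVT_gen f 0 z (fun _ => 0)) as [x [_ Hx]].
  - intros x Hx. apply Hf, Hin. lra.
  - intros x Hx. apply (is_derive_continuity_pt f x 0), Hf, Hin, Hx.
  - lra.
Qed.

Lemma harmonic_eq_cos (w r : R) (y dy : R -> R) :
  (forall z, -r < z < r -> is_derive y z (dy z)) ->
  (forall z, -r < z < r -> is_derive dy z (- w ^ 2 * y z)) ->
  y 0 = 1 -> dy 0 = 0 ->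
  forall z, -r < z < r -> y z = cos (w * z).
Proof.
  intros Hy Hdy Hy0 Hdy0.
  assert (Dy : forall z, -r < z < r -> Derive y z = dy z)
    by (intros; apply is_derive_unique; auto).
  assert (Ddy : forall z, -r < z < r -> Derive dy z = - w ^ 2 * y z)
    by (intros; apply is_derive_unique; auto).
  (* [E] is the energy of [y - cos (w .)], which solves the same equation;
     it is conserved and vanishes at 0 *)
  set (E z := (dy z + w * sin (w * z)) ^ 2 + w ^ 2 * (y z - cos (w * z)) ^ 2).
  assert (HE : forall z, -r < z < r -> E z = E 0).
  { apply is_derive_0_eq. intros z Hz. unfold E. auto_derive.
    - split; [exists (- w ^ 2 * y z) | split; [exists (dy z)|]]; auto.
    - rewrite Dy, Ddy by exact Hz. ring. }
  assert (Hv : forall z, -r < z < r -> dy z + w * sin (w * z) = 0).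
  { intros z Hz. pose proof (HE z Hz) as Hz0. unfold E in Hz0.
    rewrite Hy0, Hdy0, Rmult_0_r, sin_0, cos_0 in Hz0.
    pose proof (pow2_ge_0 (dy z + w * sin (w * z))).
    pose proof (pow2_ge_0 (w * (y z - cos (w * z)))). rewrite Rpow_mult_distr in *.
    assert (Hsq : (dy z + w * sin (w * z)) ^ 2 = 0) by lra. nra. }
  assert (Hd : forall z, -r < z < r -> y z - cos (w * z) = y 0 - cos (w * 0)).
  { apply (is_derive_0_eq (fun z => y z - cos (w * z))). intros z Hz.
    auto_derive; [exists (dy z); auto|]. rewrite Dy by exact Hz.
    rewrite <- (Hv z Hz). ring. }
  intros z Hz. pose proof (Hd z Hz). rewrite Hy0, Rmult_0_r, cos_0 in *. lra.
Qed.

Lemma Rabs_sin2_lt_1 z : -(PI/2) < z < PI/2 -> Rabs (sin z ^ 2) < 1.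
Proof.
  intro Hz. pose proof (cos_gt_0 z ltac:(lra) ltac:(lra)).
  pose proof (sin2_cos2 z). unfold Rsqr in *.
  rewrite Rabs_pos_eq; nra.
Qed.

Section CosineIdentity.

Variable a : R.
Hypothesis Ha : 0 < a < 1.

Let u := hyp_coef a (1 - a) (1 / 2).
Let y z := cos z * PSeries u (sin z ^ 2).
Let dy z := - sin z * PSeries u (sin z ^ 2)
            + 2 * sin z * cos z ^ 2 * PSeries (PS_derive u) (sin z ^ 2).

Let radius_u : Rbar_le 1 (CV_radius u).
Proof. apply CV_radius_hyp_coef; nra. Qed.

Let radius_Du : Rbar_le 1 (CV_radius (PS_derive u)).
Proof. rewrite CV_radius_derive. exact radius_u. Qed.

Let Derive_u w : Rabs w < 1 -> Derive (fun x => PSeries u x) w = PSeries (PS_derive u) w.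
Proof. intro Hw. apply is_derive_unique, is_derive_PSeries_unit_disk, Hw. exact radius_u. Qed.

Let Derive_Du w : Rabs w < 1 ->
  Derive (fun x => PSeries (PS_derive u) x) w = PSeries (PS_derive (PS_derive u)) w.
Proof. intro Hw. apply is_derive_unique, is_derive_PSeries_unit_disk, Hw. exact radius_Du. Qed.

Let is_derive_y z : -(PI/2) < z < PI/2 -> is_derive y z (dy z).
Proof.
  intro Hz. pose proof (Rabs_sin2_lt_1 z Hz) as Hs.
  unfold y, dy. auto_derive; replace (sin z * (sin z * 1)) with (sin z ^ 2) by ring.
  - apply ex_derive_PSeries, Rbar_lt_Rabs_radius; [exact radius_u | exact Hs].
  - rewrite Derive_u by exact Hs. ring.
Qed.

Let is_derive_dy z : -(PI/2) < z < PI/2 -> is_derive dy z (- (1 - 2 * a) ^ 2 * y z).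
Proof.
  intro Hz. pose proof (Rabs_sin2_lt_1 z Hz) as Hs.
  pose proof (hyp2F1_ode a (1 - a) (1 / 2) ltac:(lra) ltac:(lra) ltac:(lra) ltac:(nra)
    ltac:(lra) _ Hs) as Hode. cbv zeta in Hode. fold u in Hode.
  unfold y, dy. auto_derive; replace (sin z * (sin z * 1)) with (sin z ^ 2) by ring.
  - repeat split; apply ex_derive_PSeries, Rbar_lt_Rabs_radius; auto.
  - rewrite Derive_u, Derive_Du by exact Hs.
    pose proof (sin2_cos2 z) as Hsc. unfold Rsqr in Hsc.
    set (w := sin z ^ 2) in *.
    set (F0 := PSeries u w) in *. set (F1 := PSeries (PS_derive u) w) in *.
    set (F2 := PSeries (PS_derive (PS_derive u)) w) in *.
    assert (Hc2 : cos z * cos z = 1 - w) by (unfold w; simpl; lra).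
    assert (Hs2 : sin z * sin z = w) by (unfold w; simpl; lra).
    transitivity (cos z * (- F0 + (2 * (cos z * cos z) - 6 * (sin z * sin z)) * F1
                           + 4 * (sin z * sin z) * (cos z * cos z) * F2)); [ring|].
    rewrite Hc2, Hs2.
    transitivity (cos z * (- F0 + 4 * (w * (1 - w) * F2 + (1 / 2 - 2 * w) * F1))); [field|].
    replace (w * (1 - w) * F2 + (1 / 2 - 2 * w) * F1) with (a * (1 - a) * F0) by lra.
    ring.
Qed.

Lemma cos_mul_hyp2F1_sin2 z : -(PI/2) < z < PI/2 ->
  cos z * hyp2F1 a (1 - a) (1 / 2) (sin z ^ 2) = cos ((1 - 2 * a) * z).
Proof.
  apply (harmonic_eq_cos _ _ y dy).
  - exact is_derive_y.
  - exact is_derive_dy.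
  - unfold y. rewrite sin_0, cos_0, pow_i, PSeries_0 by lia. unfold u, hyp_coef. simpl. field.
  - unfold dy. rewrite sin_0. ring.
Qed.

End CosineIdentity.

(** * Termwise integration against Wallis' integrals *)

Lemma is_RInt_sin_pow_reduction n :
  is_RInt (fun t => (2 * INR n + 1) * sin t ^ (2 * n) - (2 * INR n + 2) * sin t ^ (2 * n + 2))
    (-(PI/2)) (PI/2) 0.
Proof.
  replace 0 with (minus (sin (PI/2) ^ (2 * n + 1) * cos (PI/2))
                        (sin (-(PI/2)) ^ (2 * n + 1) * cos (-(PI/2))))
    by (rewrite cos_neg, cos_PI2; unfold minus, plus, opp; simpl; ring).
  apply (is_RInt_derive (fun t => sin t ^ (2 * n + 1) * cos t)).
  - intros t _. auto_derive; [exact I|].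
    replace (n + (n + 0) + 1)%nat with (S (2 * n)) by lia.
    rewrite pow_add, S_INR, mult_INR. simpl Init.Nat.pred.
    pose proof (sin2_cos2 t) as Hsc. unfold Rsqr in Hsc.
    transitivity ((2 * INR n + 1) * sin t ^ (2 * n) * (cos t * cos t)
                  - sin t ^ (2 * n) * (sin t * sin t)); [simpl; ring|].
    replace (cos t * cos t) with (1 - sin t * sin t) by lra. simpl. ring.
  - intros t _. apply (ex_derive_continuous (V := R_NormedModule)). auto_derive. exact I.
Qed.

Lemma is_RInt_sin_pow_even n :
  is_RInt (fun t => sin t ^ (2 * n)) (-(PI/2)) (PI/2) (PI * poch (1/2) n / INR (fact n)).
Proof.
  induction n as [|n IH].
  - apply (is_RInt_ext (fun _ => 1)); [intros; reflexivity|].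
    replace (PI * poch (1/2) 0 / INR (fact 0)) with (scal (PI/2 - -(PI/2)) 1)
      by (unfold scal; simpl; unfold mult; simpl; field).
    apply (is_RInt_const (V := R_NormedModule)).
  - pose proof (pos_INR n). pose proof (INR_fact_lt_0 n).
    pose proof (is_RInt_scal _ _ _ (/ (2 * INR n + 2)) _
      (is_RInt_minus _ _ _ _ _ _
        (is_RInt_scal _ _ _ (2 * INR n + 1) _ IH) (is_RInt_sin_pow_reduction n))) as Hrec.
    match type of Hrec with is_RInt _ _ _ ?l =>
      replace (PI * poch (1/2) (S n) / INR (fact (S n))) with l end.
    + refine (is_RInt_ext _ _ _ _ _ _ Hrec). intros t _.
      replace (2 * S n)%nat with (2 * n + 2)%nat by lia.
      unfold scal, minus, plus, opp; simpl; unfold mult; simpl. field. lra.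
    + rewrite fact_simpl, mult_INR, S_INR.
      unfold scal, minus, plus, opp; simpl; unfold mult; simpl. field. lra.
Qed.

Lemma sin_pow2_bound t : 0 <= sin t ^ 2 <= 1.
Proof.
  pose proof (sin2_cos2 t). pose proof (pow2_ge_0 (sin t)). pose proof (pow2_ge_0 (cos t)).
  unfold Rsqr in *. simpl in *. lra.
Qed.

Lemma is_RInt_PSeries_sin2 (u : nat -> R) (q : R) :
  (forall n, Rabs (u n) <= 1) -> 0 <= q < 1 ->
  is_RInt (fun t => PSeries u (q * sin t ^ 2)) (-(PI/2)) (PI/2)
    (PSeries (fun n => u n * (PI * poch (1/2) n / INR (fact n))) q).
Proof.
  intros Hu Hq.
  set (v n := u n * (PI * poch (1/2) n / INR (fact n))).
  set (partial N t := sum_f_R0 (fun k => u k * (q * sin t ^ 2) ^ k) N).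
  assert (Hpartial : forall N, is_RInt (partial N) (-(PI/2)) (PI/2)
                                 (sum_f_R0 (fun k => v k * q ^ k) N)).
  { assert (Hterm : forall k, is_RInt (fun t => u k * (q * sin t ^ 2) ^ k)
                                (-(PI/2)) (PI/2) (v k * q ^ k)).
    { intro k. apply (is_RInt_ext (fun t => scal (u k * q ^ k) (sin t ^ (2 * k)))).
      - intros t _. rewrite Rpow_mult_distr, pow_mult.
        unfold scal; simpl; unfold mult; simpl. ring.
      - replace (v k * q ^ k) with (scal (u k * q ^ k) (PI * poch (1/2) k / INR (fact k)))
          by (unfold v, scal; simpl; unfold mult; simpl; ring).
        apply (is_RInt_scal (V := R_NormedModule)), is_RInt_sin_pow_even. }
    induction N as [|N IH]; [apply Hterm|].
    apply (is_RInt_plus _ _ _ _ _ _ IH (Hterm (S N))). }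
  assert (Hunif : filterlim partial eventually
                    (locally (T := fct_UniformSpace R R_UniformSpace)
                             (fun t => PSeries u (q * sin t ^ 2)))).
  { apply filterlim_locally. intro eps.
    destruct (pow_lt_1_zero q ltac:(rewrite Rabs_pos_eq; lra) (eps * (1 - q)))
      as [N0 HN0]; [apply Rmult_lt_0_compat; [apply cond_pos | lra]|].
    exists N0. intros N HN t. change (Rabs (partial N t - PSeries u (q * sin t ^ 2)) < eps).
    rewrite Rabs_minus_sym.
    eapply Rle_lt_trans; [apply (PSeries_tail_le u q); [exact Hu|]|].
    - split; [|lra]. pose proof (sin_pow2_bound t).
      rewrite Rabs_pos_eq; nra.
    - pose proof (HN0 (S N) ltac:(lia)) as Hlt.
      rewrite Rabs_pos_eq in Hlt by (apply pow_le; lra).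
      apply (Rmult_lt_reg_r (1 - q)); [lra|].
      unfold Rdiv. rewrite Rmult_assoc, Rinv_l, Rmult_1_r by lra. exact Hlt. }
  destruct (filterlim_RInt partial (-(PI/2)) (PI/2) eventually _ _ _ Hpartial Hunif)
    as [If [Hlim HIf]].
  replace (PSeries v q) with If; [exact HIf|].
  symmetry. apply is_series_unique.
  apply (filterlim_ext (fun N => sum_f_R0 (fun k => v k * q ^ k) N)); [|exact Hlim].
  intro N. symmetry. apply sum_n_Reals.
Qed.

Lemma is_RInt_hyp2F1_sin2 (a b q : R) :
  0 < a -> 0 < b -> a * b <= 1 / 2 -> a + b <= 3 / 2 -> 0 <= q < 1 ->
  is_RInt (fun t => hyp2F1 a b (1 / 2) (q * sin t ^ 2)) (-(PI/2)) (PI/2)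
    (PI * hyp2F1 a b 1 q).
Proof.
  intros Ha Hb Hab Habc Hq.
  replace (PI * hyp2F1 a b 1 q)
    with (PSeries (fun n => hyp_coef a b (1 / 2) n * (PI * poch (1/2) n / INR (fact n))) q).
  - apply is_RInt_PSeries_sin2; [|exact Hq].
    intro n. apply Rabs_hyp_coef_le_1; lra.
  - rewrite hyp2F1_PSeries, <- PSeries_scal. apply PSeries_ext. intro n.
    unfold PS_scal, scal; simpl; unfold mult; simpl. unfold hyp_coef. rewrite poch_1.
    pose proof (poch_pos (1/2) n ltac:(lra)). pose proof (INR_fact_lt_0 n).
    field. lra.
Qed.

(** * Changes of variables *)

Lemma IVT_open (X : R -> R) (p q u : R) :
  (forall x, continuous X x) -> p < q -> X q < u < X p \/ X p < u < X q ->
  exists r, p < r < q /\ X r = u.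
Proof.
  intros HX Hpq Hu.
  assert (HXc : continuity X) by (intro x; apply continuity_pt_filterlim, HX).
  destruct (IVT_gen X p q u HXc) as [r [Hr Hru]].
  - unfold Rmin, Rmax. destruct (Rle_dec (X p) (X q)); lra.
  - rewrite Rmin_left, Rmax_right in Hr by lra.
    exists r. split; [|exact Hru].
    destruct (Req_dec r p) as [->|]; [lra|]. destruct (Req_dec r q) as [->|]; lra.
Qed.

Lemma at_right_decreasing_image (X : R -> R) (c d : R) (Q : R -> Prop) :
  (forall x, continuous X x) -> c < d -> (forall p, c < p < d -> X d < X p) ->
  at_left d Q -> at_right (X d) (fun x => exists p, c < p < d /\ Q p /\ X p = x).
Proof.
  intros HX Hcd HXd [delta HQ].
  set (p0 := d - Rmin delta (d - c) / 2).
  assert (Hp0 : c < p0 < d /\ d - delta < p0).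
  { pose proof (cond_pos delta). pose proof (Rmin_l delta (d - c)).
    pose proof (Rmin_r delta (d - c)). pose proof (Rmin_glb_lt delta (d - c) 0).
    unfold p0. lra. }
  assert (Hgap : 0 < X p0 - X d) by (pose proof (HXd p0 (proj1 Hp0)); lra).
  exists (mkposreal _ Hgap). intros x Hx Hdx.
  change (Rabs (x - X d) < X p0 - X d) in Hx. apply Rabs_lt_between' in Hx.
  destruct (IVT_open X p0 d x HX (proj2 (proj1 Hp0)) ltac:(left; split; lra))
    as [p [Hp Hpx]].
  exists p. split; [lra|]. split; [|exact Hpx].
  apply HQ; [|lra]. change (Rabs (p - d) < delta). rewrite Rabs_left; lra.
Qed.

Lemma at_left_decreasing_image (X : R -> R) (c d : R) (Q : R -> Prop) :
  (forall x, continuous X x) -> c < d -> (forall p, c < p < d -> X p < X c) ->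
  at_right c Q -> at_left (X c) (fun x => exists p, c < p < d /\ Q p /\ X p = x).
Proof.
  intros HX Hcd HXc [delta HQ].
  set (p0 := c + Rmin delta (d - c) / 2).
  assert (Hp0 : c < p0 < d /\ p0 < c + delta).
  { pose proof (cond_pos delta). pose proof (Rmin_l delta (d - c)).
    pose proof (Rmin_r delta (d - c)). pose proof (Rmin_glb_lt delta (d - c) 0).
    unfold p0. lra. }
  assert (Hgap : 0 < X c - X p0) by (pose proof (HXc p0 (proj1 Hp0)); lra).
  exists (mkposreal _ Hgap). intros x Hx Hxc.
  change (Rabs (x - X c) < X c - X p0) in Hx. apply Rabs_lt_between' in Hx.
  destruct (IVT_open X c p0 x HX (proj1 (proj1 Hp0)) ltac:(left; split; lra))
    as [p [Hp Hpx]].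
  exists p. split; [lra|]. split; [|exact Hpx].
  apply HQ; [|lra]. change (Rabs (p - c) < delta). rewrite Rabs_right; lra.
Qed.

Lemma is_RInt_gen_comp_decreasing (f X : R -> R) (G : R -> R -> R) (c d l : R) :
  (forall x, continuous X x) -> c < d -> (forall p, c < p < d -> X d < X p < X c) ->
  (forall p1 p2, c < p1 < d -> c < p2 < d -> is_RInt f (X p2) (X p1) (G p1 p2)) ->
  filterlim (fun z => G (fst z) (snd z)) (filter_prod (at_right c) (at_left d)) (locally l) ->
  is_RInt_gen f (at_right (X d)) (at_left (X c)) l.
Proof.
  intros HX Hcd HXrange Hsubst HG P HP.
  destruct (HG P HP) as [Q1 Q2 HQ1 HQ2 HQ].
  apply (Filter_prod _ _ _ (fun x => exists p, c < p < d /\ Q2 p /\ X p = x)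
                           (fun x => exists p, c < p < d /\ Q1 p /\ X p = x)).
  - apply at_right_decreasing_image; auto. intros p Hp. apply HXrange, Hp.
  - apply at_left_decreasing_image; auto. intros p Hp. apply HXrange, Hp.
  - intros x1 x2 [p2 [Hp2 [HQp2 <-]]] [p1 [Hp1 [HQp1 <-]]].
    exists (G p1 p2). split; [apply Hsubst; assumption | exact (HQ p1 p2 HQp1 HQp2)].
Qed.

Lemma filterlim_RInt_at_endpoints (g : R -> R) (c d : R) :
  (forall x, continuous g x) ->
  filterlim (fun z => RInt g (fst z) (snd z)) (filter_prod (at_right c) (at_left d))
    (locally (RInt g c d)).
Proof.
  intro Hg.
  apply (filterlim_filter_le_1 _ (F := locally (c, d))).
  - intros P [eps HP]. apply (Filter_prod _ _ _ (ball c eps) (ball d eps)).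
    + exists eps. auto.
    + exists eps. auto.
    + intros x y Hx Hy. apply HP. split; assumption.
  - apply (continuous_RInt g c d (RInt g)). apply filter_forall. intro z.
    apply (RInt_correct (V := R_CompleteNormedModule)), ex_RInt_continuous. auto.
Qed.

Lemma is_RInt_subst (f X dX g : R -> R) (a b : R) :
  (forall x, is_derive X x (dX x)) -> (forall x, continuous dX x) ->
  (forall x, Rmin a b <= x <= Rmax a b -> continuous f (X x)) ->
  (forall x, Rmin a b <= x <= Rmax a b -> dX x * f (X x) = g x) ->
  is_RInt f (X a) (X b) (RInt g a b).
Proof.
  intros HX HdX Hf Hg.
  pose proof (is_RInt_comp f X dX a b Hf (fun x _ => conj (HX x) (HdX x))) as Hcomp.
  apply (is_RInt_ext _ g) in Hcomp; [|intros x Hx; apply Hg; lra].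
  rewrite (is_RInt_unique _ _ _ _ Hcomp).
  apply (RInt_correct (V := R_CompleteNormedModule)), ex_RInt_continuous.
  intros z Hz.
  assert (HXc : continuity X) by (intro x; apply (is_derive_continuity_pt X x (dX x)), HX).
  destruct (IVT_gen X a b z HXc Hz) as [x [Hx <-]]. apply Hf, Hx.
Qed.

Lemma is_RInt_add_opp (g : R -> R) (r l : R) :
  is_RInt g (-r) r l -> is_RInt (fun p => g p + g (-p)) (-r) r (2 * l).
Proof.
  intro Hg.
  assert (Hopp : is_RInt (fun p => g (-p)) (-r) r l).
  { assert (H : is_RInt g (-r) (- - r) l) by (rewrite Ropp_involutive; exact Hg).
    apply is_RInt_comp_opp, is_RInt_swap, is_RInt_opp in H.
    rewrite opp_opp in H. apply (is_RInt_ext _ _ _ _ _ (fun x _ => opp_opp _) H). }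
  replace (2 * l) with (plus l l) by (unfold plus; simpl; ring).
  exact (is_RInt_plus _ _ _ _ _ _ Hg Hopp).
Qed.

Lemma is_RInt_of_add_opp (g : R -> R) (r L : R) :
  ex_RInt g (-r) r -> is_RInt (fun p => g p + g (-p)) (-r) r L -> is_RInt g (-r) r (L / 2).
Proof.
  intros Hex HL.
  pose proof (is_RInt_add_opp _ _ _ (RInt_correct (V := R_CompleteNormedModule) _ _ _ Hex))
    as H2.
  assert (E : 2 * RInt g (-r) r = L).
  { rewrite <- (is_RInt_unique (V := R_CompleteNormedModule) _ _ _ _ HL).
    exact (eq_sym (is_RInt_unique _ _ _ _ H2)). }
  replace (L / 2) with (RInt g (-r) r) by lra.
  exact (RInt_correct _ _ _ Hex).
Qed.

(** * The Chebyshev substitution *)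

Lemma chebT_cos n t : chebT n (cos t) = cos (INR n * t).
Proof.
  enough (H : chebT n (cos t) = cos (INR n * t) /\
              chebT (S n) (cos t) = cos (INR (S n) * t)) by apply H.
  induction n as [|n [IH1 IH2]].
  - simpl. rewrite Rmult_0_l, Rmult_1_l, cos_0. auto.
  - split; [exact IH2|].
    change (chebT (S (S n)) (cos t)) with (2 * cos t * chebT (S n) (cos t) - chebT n (cos t)).
    rewrite IH1, IH2, !S_INR.
    replace ((INR n + 1 + 1) * t) with ((INR n + 1) * t + t) by ring.
    replace (INR n * t) with ((INR n + 1) * t - t) by ring.
    rewrite cos_plus, cos_minus. ring.
Qed.

Lemma asin_lt x y : -1 <= x -> y <= 1 -> x < y -> asin x < asin y.
Proof.
  intros Hx Hy Hxy. pose proof (asin_bound x). pose proof (asin_bound y).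
  apply sin_increasing_0; try lra. rewrite !sin_asin; lra.
Qed.

Lemma is_derive_asin y : -1 < y < 1 -> is_derive asin y (1 / sqrt (1 - y²)).
Proof.
  intro Hy. apply is_derive_Reals.
  pose proof (derive_pt_asin y Hy) as E. unfold derive_pt in E.
  destruct (derivable_pt_asin y Hy) as [l Hl]. simpl in E. subst. exact Hl.
Qed.

Section ChebyshevSubstitution.

Variable k : R.
Hypothesis Hk : 0 < k < 1.

(* The substitution of the paper in the variable φ: sin θ = k sin φ and
   x = cos((π + θ)/3); [pullback] is the transformed integrand. *)
Definition theta p := asin (k * sin p).
Definition xmap p := cos ((PI + theta p) / 3).
Definition xmap' p := - sin ((PI + theta p) / 3) * (k * cos p / cos (theta p)) / 3.
Definition pullback p := sin ((PI + theta p) / 3) / (3 * sqrt 2 * cos (theta p)).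

Lemma ksin_bound p : - k <= k * sin p <= k.
Proof. pose proof (SIN_bound p). split; nra. Qed.

Lemma sin_theta p : sin (theta p) = k * sin p.
Proof. pose proof (ksin_bound p). apply sin_asin. lra. Qed.

Lemma cos_theta p : cos (theta p) = sqrt (1 - (k * sin p)²).
Proof. pose proof (ksin_bound p). apply cos_asin. lra. Qed.

Lemma theta_bound_PI2 p : -(PI/2) < theta p < PI/2.
Proof. pose proof (ksin_bound p). apply asin_bound_lt. lra. Qed.

Lemma cos_theta_pos p : 0 < cos (theta p).
Proof. pose proof (theta_bound_PI2 p). apply cos_gt_0; lra. Qed.

Lemma theta_opp p : theta (- p) = - theta p.
Proof. unfold theta. rewrite sin_neg, <- Ropp_mult_distr_r, asin_opp. reflexivity. Qed.

Lemma theta_PI2 : theta (PI / 2) = asin k.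
Proof. unfold theta. rewrite sin_PI2, Rmult_1_r. reflexivity. Qed.

Lemma theta_bound p : -(PI/2) < p < PI/2 -> - asin k < theta p < asin k.
Proof.
  intro Hp. pose proof (cos_gt_0 p ltac:(lra) ltac:(lra)).
  pose proof (sin2_cos2 p). unfold Rsqr in *.
  assert (Hsin : -1 < sin p < 1) by (split; nra).
  rewrite <- asin_opp. unfold theta. split; apply asin_lt; nra.
Qed.

Lemma is_derive_theta p : is_derive theta p (k * cos p / cos (theta p)).
Proof.
  pose proof (ksin_bound p). pose proof (cos_theta_pos p).
  assert (Hd : is_derive (fun p => k * sin p) p (k * cos p)) by (auto_derive; [exact I | ring]).
  pose proof (is_derive_comp _ _ p _ _ (is_derive_asin (k * sin p) ltac:(lra)) Hd) as Hcomp.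
  rewrite <- cos_theta in Hcomp.
  replace (k * cos p / cos (theta p)) with (scal (k * cos p) (1 / cos (theta p)))
    by (unfold scal; simpl; unfold mult; simpl; field; lra).
  exact Hcomp.
Qed.

Lemma ex_derive_theta p : ex_derive theta p.
Proof. eexists. apply is_derive_theta. Qed.

Lemma Derive_theta p : Derive theta p = k * cos p / cos (theta p).
Proof. apply is_derive_unique, is_derive_theta. Qed.

Lemma is_derive_xmap p : is_derive xmap p (xmap' p).
Proof.
  pose proof (cos_theta_pos p).
  unfold xmap. auto_derive; [apply ex_derive_theta|].
  rewrite Derive_theta. unfold xmap', Rdiv. field. lra.
Qed.

Lemma continuous_xmap p : continuous xmap p.
Proof. apply (ex_derive_continuous (V := R_NormedModule)). eexists. apply is_derive_xmap. Qed.

Lemma continuous_xmap' p : continuous xmap' p.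
Proof.
  pose proof (cos_theta_pos p).
  apply (ex_derive_continuous (V := R_NormedModule)).
  unfold xmap'. auto_derive; repeat split; auto using ex_derive_theta. lra.
Qed.

Lemma continuous_pullback p : continuous pullback p.
Proof.
  pose proof (cos_theta_pos p). assert (0 < sqrt 2) by (apply sqrt_lt_R0; lra).
  apply (ex_derive_continuous (V := R_NormedModule)).
  unfold pullback. auto_derive; repeat split; auto using ex_derive_theta.
  apply Rgt_not_eq, Rmult_lt_0_compat; lra.
Qed.

Lemma ex_RInt_pullback a b : ex_RInt pullback a b.
Proof.
  apply (ex_RInt_continuous (V := R_CompleteNormedModule)). intros. apply continuous_pullback.
Qed.

Lemma xmap_bound p : -(PI/2) < p < PI/2 -> xmap (PI / 2) < xmap p < xmap (-(PI / 2)).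
Proof.
  intro Hp. pose proof (theta_bound p Hp). pose proof PI_RGT_0. pose proof (asin_bound k).
  unfold xmap. rewrite theta_opp, theta_PI2.
  split; apply cos_decreasing_1; lra.
Qed.

Lemma chebT6_xmap p : chebT 6 (xmap p) - (1 - 2 * k ^ 2) = 2 * (k * cos p) ^ 2.
Proof.
  unfold xmap. rewrite chebT_cos.
  replace (INR 6 * ((PI + theta p) / 3)) with (2 * theta p + 2 * PI)
    by (replace (INR 6) with 6 by (simpl; ring); field).
  rewrite cos_plus, cos_2PI, sin_2PI, cos_2a_sin, sin_theta, Rpow_mult_distr.
  pose proof (sin2_cos2 p) as Hsc. unfold Rsqr in Hsc.
  replace (cos p ^ 2) with (1 - sin p * sin p) by (simpl; lra). ring.
Qed.

Lemma continuous_integrand x : 0 < chebT 6 x - (1 - 2 * k ^ 2) ->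
  continuous (fun x => / sqrt (chebT 6 x - (1 - 2 * k ^ 2))) x.
Proof.
  intro Hx. apply (ex_derive_continuous (V := R_NormedModule)).
  simpl chebT in *. auto_derive. repeat split; [exact Hx|].
  apply Rgt_not_eq, sqrt_lt_R0, Hx.
Qed.

Lemma xmap'_mul_integrand p : -(PI/2) < p < PI/2 ->
  xmap' p * / sqrt (chebT 6 (xmap p) - (1 - 2 * k ^ 2)) = - pullback p.
Proof.
  intro Hp. pose proof (cos_gt_0 p ltac:(lra) ltac:(lra)). pose proof (cos_theta_pos p).
  assert (0 < sqrt 2) by (apply sqrt_lt_R0; lra).
  rewrite chebT6_xmap, sqrt_mult, sqrt_pow2 by (try apply pow2_ge_0; nra).
  unfold xmap', pullback. field. repeat split; nra.
Qed.

Lemma pullback_add_opp p :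
  pullback p + pullback (- p) = / sqrt 6 * hyp2F1 (1/3) (2/3) (1/2) (k ^ 2 * sin p ^ 2).
Proof.
  pose proof (cos_mul_hyp2F1_sin2 (1/3) ltac:(lra) _ (theta_bound_PI2 p)) as Hid.
  rewrite sin_theta, Rpow_mult_distr in Hid.
  replace (1 - 1/3) with (2/3) in Hid by field.
  replace ((1 - 2 * (1/3)) * theta p) with (theta p / 3) in Hid by field.
  pose proof (cos_theta_pos p).
  assert (0 < sqrt 2) by (apply sqrt_lt_R0; lra).
  assert (0 < sqrt 3) by (apply sqrt_lt_R0; lra).
  assert (Hsqrt3 : sqrt 3 * sqrt 3 = 3) by (apply sqrt_sqrt; lra).
  unfold pullback. rewrite theta_opp, cos_neg.
  replace ((PI + theta p) / 3) with (PI / 3 + theta p / 3) by field.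
  replace ((PI + - theta p) / 3) with (PI / 3 - theta p / 3) by field.
  rewrite sin_plus, sin_minus, sin_PI3, cos_PI3, <- Hid.
  replace 6 with (2 * 3) by ring. rewrite sqrt_mult by lra.
  replace (3 * sqrt 2 * cos (theta p)) with (sqrt 3 * sqrt 3 * sqrt 2 * cos (theta p))
    by (rewrite Hsqrt3; ring).
  field. lra.
Qed.

Lemma is_RInt_pullback :
  is_RInt pullback (-(PI/2)) (PI/2) (/ sqrt 6 * (PI / 2 * hyp2F1 (1/3) (2/3) 1 (k ^ 2))).
Proof.
  replace (/ sqrt 6 * (PI / 2 * hyp2F1 (1/3) (2/3) 1 (k ^ 2)))
    with (scal (/ sqrt 6) (PI * hyp2F1 (1/3) (2/3) 1 (k ^ 2)) / 2)
    by (unfold scal; simpl; unfold mult, Rdiv; simpl; ring).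
  apply is_RInt_of_add_opp; [apply ex_RInt_pullback|].
  apply (is_RInt_ext (fun p => scal (/ sqrt 6) (hyp2F1 (1/3) (2/3) (1/2) (k ^ 2 * sin p ^ 2)))).
  - intros p _. rewrite pullback_add_opp. reflexivity.
  - apply (is_RInt_scal (V := R_NormedModule)), is_RInt_hyp2F1_sin2; try lra.
    simpl. nra.
Qed.

Lemma is_RInt_integrand_xmap p1 p2 : -(PI/2) < p1 < PI/2 -> -(PI/2) < p2 < PI/2 ->
  is_RInt (fun x => / sqrt (chebT 6 x - (1 - 2 * k ^ 2))) (xmap p2) (xmap p1)
    (RInt pullback p1 p2).
Proof.
  intros Hp1 Hp2.
  assert (Hin : forall p, Rmin p2 p1 <= p <= Rmax p2 p1 -> -(PI/2) < p < PI/2).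
  { intros p Hp. unfold Rmin, Rmax in Hp. destruct (Rle_dec p2 p1); lra. }
  replace (RInt pullback p1 p2) with (RInt (fun p => - pullback p) p2 p1).
  - apply (is_RInt_subst _ _ xmap'); [exact is_derive_xmap | exact continuous_xmap' | |].
    + intros p Hp. pose proof (Hin p Hp). pose proof (cos_gt_0 p ltac:(lra) ltac:(lra)).
      apply continuous_integrand. rewrite chebT6_xmap.
      apply Rmult_lt_0_compat; [lra | apply pow_lt, Rmult_lt_0_compat; lra].
    + intros p Hp. apply xmap'_mul_integrand, Hin, Hp.
  - rewrite (RInt_opp (V := R_CompleteNormedModule)) by apply ex_RInt_pullback.
    rewrite <- (opp_RInt_swap (V := R_CompleteNormedModule)) by apply ex_RInt_pullback.
    apply opp_opp.
Qed.

Lemma is_RInt_gen_chebT6 :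
  is_RInt_gen (fun x => / sqrt (chebT 6 x - (1 - 2 * k ^ 2)))
    (at_right (cos ((PI + asin k) / 3))) (at_left (cos ((PI - asin k) / 3)))
    (/ sqrt 6 * (PI / 2 * hyp2F1 (1/3) (2/3) 1 (k ^ 2))).
Proof.
  replace (cos ((PI + asin k) / 3)) with (xmap (PI / 2))
    by (unfold xmap; rewrite theta_PI2; reflexivity).
  replace (cos ((PI - asin k) / 3)) with (xmap (-(PI / 2)))
    by (unfold xmap; rewrite theta_opp, theta_PI2; reflexivity).
  rewrite <- (is_RInt_unique (V := R_CompleteNormedModule) _ _ _ _ is_RInt_pullback).
  apply (is_RInt_gen_comp_decreasing _ xmap (RInt pullback)).
  - exact continuous_xmap.
  - pose proof PI_RGT_0. lra.
  - exact xmap_bound.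
  - exact is_RInt_integrand_xmap.
  - apply filterlim_RInt_at_endpoints, continuous_pullback.
Qed.

End ChebyshevSubstitution.

Theorem theorem4 (alpha : R) (Ha : 0 < alpha < PI / 2) :
  let kappa := sin alpha in
  is_RInt_gen (fun x : R => / sqrt (chebT 6 x - cos (2 * alpha)))
    (at_right (cos ((PI + alpha) / 3))) (at_left (cos ((PI - alpha) / 3)))
    (/ sqrt 6 * (PI / 2 * hyp2F1 (1/3) (2/3) 1 (kappa ^ 2))).
Proof.
  intro kappa.
  assert (Hkappa : 0 < kappa < 1).
  { pose proof PI_RGT_0. unfold kappa. split.
    - apply sin_gt_0; lra.
    - rewrite <- sin_PI2. apply sin_increasing_1; lra. }
  assert (Halpha : asin kappa = alpha) by (apply asin_sin; lra).
  replace (cos (2 * alpha)) with (1 - 2 * kappa ^ 2) by (unfold kappa; rewrite cos_2a_sin; ring).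
  rewrite <- Halpha. exact (is_RInt_gen_chebT6 kappa Hkappa).
Qed.
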